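(* Let $G$ be a graph with vertex order $v_1,\ldots,v_n$, let $D$ be a minimal dominating set of $G$, let $u,w\in D$ be adjacent, let $v\in P_D(u)$, and let $X_{uv}$, $D^*$, $Z_{uv}$ be as in the context (so $D^*=((D\setminus\{u\})\cup X_{uv}\cup\{v\})\setminus Z_{uv}$). Then for every $z\in Z_{uv}$: (1) $z\notin N[X_{uv}\cup\{v\}]$; (2) $z$ has a neighbor in $D^*\setminus(X_{uv}\cup\{v\})$; (3) there is a vertex $x\in N[X_{uv}\cup\{v\}]\setminus N[u]$ adjacent to $z$ with $x\notin N[D^*\setminus(X_{uv}\cup\{v\})]$. Furthermore, for every $x\in N[X_{uv}\cup\{v\}]\setminus N[u]$ with $x\notin N[D^*\setminus(X_{uv}\cup\{v\})]$, there is $z\in Z_{uv}$ adjacent to $x$.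
   Context: Graphs are finite, simple, undirected; $N(x)$ is the open and $N[x]=N(x)\cup\{x\}$ the closed neighborhood, $N[S]=\bigcup_{x\in S}N[x]$. A dominating set is $D\subseteq V(G)$ with $N[D]=V(G)$; it is minimal if no proper subset is dominating. For a dominating set $D$ and $x\in D$, a vertex $y$ is private for $x$ if $y\in N[x]\setminus N[D\setminus\{x\}]$; $P_D[x]$ is the set of such $y$ and $P_D(x)=P_D[x]\cap N(x)$. Fix an order $v_1,\ldots,v_n$ of $V(G)$. Greedy removal from a dominating set $D'$: while the current set $S$ is not a minimal dominating set, remove from $S$ the vertex $v_i$ of smallest index $i$ such that $S\setminus\{v_i\}$ is still dominating. Given $D,u,v$: $X_{uv}$ is built by starting from $\emptyset$ and repeatedly adding the smallest-index vertex of $P_D(u)\setminus N[\{v\}\cup X_{uv}]$ while this set is nonempty. Let $D'=(D\setminus\{u\})\cup X_{uv}\cup\{v\}$, let $D^*$ be the result of greedy removal from $D'$, and $Z_{uv}=D'\setminus D^*$. *)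

(* Graph on vertex set 'I_n; the vertex order v_1,...,v_n is
   the natural order of 'I_n (v_{i+1} = i). *)
From mathcomp Require Import all_boot.
Set Implicit Arguments. Unset Strict Implicit. Unset Printing Implicit Defensive.

Section Dom.
Variables (n : nat) (e : rel 'I_n).

Definition onbh (x : 'I_n) : {set 'I_n} := [set y | e x y].
Definition cnbh (x : 'I_n) : {set 'I_n} := x |: onbh x.
Definition cnbhS (S : {set 'I_n}) : {set 'I_n} := \bigcup_(x in S) cnbh x.

Definition dominating (D : {set 'I_n}) : bool := cnbhS D == setT.
Definition minimal_dominating (D : {set 'I_n}) : Prop :=
  dominating D /\ forall D' : {set 'I_n}, D' \proper D -> ~~ dominating D'.
Definition minimal_dominatingb (D : {set 'I_n}) : bool :=
  dominating D && [forall D' : {set 'I_n}, (D' \proper D) ==> ~~ dominating D'].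

Definition priv (D : {set 'I_n}) (x : 'I_n) : {set 'I_n} :=
  cnbh x :\: cnbhS (D :\ x).
Definition privo (D : {set 'I_n}) (x : 'I_n) : {set 'I_n} :=
  priv D x :&: onbh x.

Definition minv (C : {set 'I_n}) : option 'I_n :=
  [pick y in C | [forall z in C, (val y <= val z)%N]].

(* construction of X_uv: repeatedly add the smallest-index vertex of
   P_D(u) \ N[{v} u X]; at most n additions, so n iterations suffice *)
Definition Xstep (D : {set 'I_n}) (u v : 'I_n) (X : {set 'I_n}) : {set 'I_n} :=
  if minv (privo D u :\: cnbhS (v |: X)) is Some y then y |: X else X.
Definition Xuv (D : {set 'I_n}) (u v : 'I_n) : {set 'I_n} :=
  iter n (Xstep D u v) set0.

Definition grstep (S : {set 'I_n}) : {set 'I_n} :=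
  if minimal_dominatingb S then S
  else if minv [set x in S | dominating (S :\ x)] is Some x then S :\ x else S.
Definition greedy (S : {set 'I_n}) : {set 'I_n} := iter n grstep S.

Definition Dprime (D : {set 'I_n}) (u v : 'I_n) : {set 'I_n} :=
  (D :\ u) :|: Xuv D u v :|: [set v].
Definition Dstar (D : {set 'I_n}) (u v : 'I_n) : {set 'I_n} :=
  greedy (Dprime D u v).
Definition Zuv (D : {set 'I_n}) (u v : 'I_n) : {set 'I_n} :=
  Dprime D u v :\: Dstar D u v.

End Dom.

(* Put P := {v} ∪ X_uv.  By construction P is an independent subset of P_D(u)
   that dominates all of P_D(u), so D' = (D \ u) ∪ P is dominating.  No vertex
   of P is adjacent to D \ u or to another vertex of P, hence every p ∈ P is its
   own private neighbour in every subset of D' and greedy removal never deletes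
   it: P ⊆ D* ⊆ D' and therefore Z_uv ⊆ D \ u, a set disjoint from N[P].  The
   four claims then follow by locating dominators: a z ∈ Z_uv is dominated in
   D* from outside P, a private neighbour of z with respect to D must be
   dominated in D* from P, and a vertex x ∈ N[P] \ N[u] not dominated by
   D* \ P is dominated in D by some d ∈ D \ u which cannot survive in D*. *)

From mathcomp Require Import all_boot.

Set Implicit Arguments. Unset Strict Implicit. Unset Printing Implicit Defensive.

Section Domination.
Variables (n : nat) (e : rel 'I_n).

Lemma in_cnbh x y : (y \in cnbh e x) = (y == x) || e x y.
Proof. by rewrite !inE. Qed.

Lemma cnbh_refl x : x \in cnbh e x.
Proof. by rewrite in_cnbh eqxx. Qed.

Lemma cnbhSP (S : {set 'I_n}) y :
  reflect (exists2 x, x \in S & y \in cnbh e x) (y \in cnbhS e S).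
Proof. exact: bigcupP. Qed.

Lemma dominatingP (S : {set 'I_n}) :
  reflect (forall y, y \in cnbhS e S) (dominating e S).
Proof.
apply: (iffP eqP) => [-> y | hS]; first by rewrite inE.
by apply/setP => y; rewrite inE hS.
Qed.

Lemma minv_in (C : {set 'I_n}) y : minv C = Some y -> y \in C.
Proof. by rewrite /minv; case: pickP => // x /andP[hx _] [<-]. Qed.

Lemma minv_None (C : {set 'I_n}) : minv C = None -> C = set0.
Proof.
rewrite /minv; case: pickP => // hC _; apply/eqP; apply: contraT => /set0Pn[y0 hy0].
case: (arg_minnP val hy0) => m hm hmin; have hmC : m \in C := hm.
by move: (hC m) => /=; rewrite hmC => /negbT/forall_inP[].
Qed.

Lemma priv_notin_cnbh (D : {set 'I_n}) x y t :
  y \in priv e D x -> t \in D :\ x -> y \notin cnbh e t.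
Proof.
by case/setDP=> _ hy ht; apply: contra hy => hyt; apply/cnbhSP; exists t.
Qed.

Lemma minimal_dominating_priv (D : {set 'I_n}) z :
  minimal_dominating e D -> z \in D -> exists p, p \in priv e D z.
Proof.
case=> /dominatingP hD hmin hz.
have : ~~ dominating e (D :\ z) by apply: hmin; rewrite properD1.
case: (boolP [exists p, p \notin cnbhS e (D :\ z)]) => [/existsP[p hp] _|/existsPn hall].
- exists p; rewrite inE hp /=; case/cnbhSP: (hD p) => d hd hpd.
  case: (eqVneq d z) => [<- //|ndz].
  by case/negP: hp; apply/cnbhSP; exists d; rewrite // in_setD1 ndz.
- by case/negP; apply/dominatingP => p; move: (hall p); rewrite negbK.
Qed.

Lemma cnbhSU (A B : {set 'I_n}) : cnbhS e (A :|: B) = cnbhS e A :|: cnbhS e B.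
Proof. exact: bigcup_setU. Qed.

Definition independent (S : {set 'I_n}) := {in S &, forall a b, ~~ e a b}.

Hypotheses (e_sym : symmetric e) (e_irr : irreflexive e).

Lemma cnbh_sym x y : (y \in cnbh e x) = (x \in cnbh e y).
Proof. by rewrite !in_cnbh eq_sym e_sym. Qed.

Section Swap.
Variables (D : {set 'I_n}) (u v : 'I_n).
Hypotheses (hD : minimal_dominating e D) (hu : u \in D) (hv : v \in privo e D u).

Local Notation P := (v |: Xuv e D u v).
Local Notation Ds := (Dstar e D u v).
Local Notation Z := (Zuv e D u v).

Definition Xuv_invariant (X : {set 'I_n}) :=
  X \subset privo e D u /\ independent (v |: X).

Lemma Xstep_invariant X : Xuv_invariant X -> Xuv_invariant (Xstep e D u v X).
Proof.
case=> hXp hXi; rewrite /Xstep; case E: minv => [y|]; last by split.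
have /setDP[hyp hyN] := minv_in E.
have nb a : a \in v |: X -> ~~ e a y.
  by move=> ha; apply: contra hyN => hay; apply/cnbhSP; exists a; rewrite // in_cnbh hay orbT.
split; first by rewrite subUset sub1set hyp.
rewrite setUCA => a b /setU1P[-> | ha] /setU1P[-> | hb].
- by rewrite e_irr.
- by rewrite e_sym nb.
- exact: nb.
- exact: hXi.
Qed.

Lemma Xuv_iter_invariant k : Xuv_invariant (iter k (Xstep e D u v) set0).
Proof.
elim: k => [|k IH] /=; last exact: Xstep_invariant.
by split=> [|a b]; rewrite ?sub0set // setU0 => /set1P-> /set1P->; rewrite e_irr.
Qed.

Definition Xcand (X : {set 'I_n}) := privo e D u :\: cnbhS e (v |: X).

Lemma Xiter_grows k :
  let X := iter k (Xstep e D u v) set0 in Xcand X = set0 \/ k <= #|X|.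
Proof.
elim: k => [|k IH] /=; first by right.
move: IH; set X := iter k _ _; rewrite /Xstep -/(Xcand X).
case E: minv => [y|]; last by left; exact: minv_None.
have /setDP[_ hyN] := minv_in E.
case=> [hX0 | hk]; first by move: (minv_in E); rewrite hX0 inE.
have hyX : y \notin X.
  by apply: contra hyN => hy; apply/cnbhSP; exists y; rewrite ?cnbh_refl // setU1r.
by right; rewrite cardsU1 hyX.
Qed.

Lemma privo_sub_cnbhS_P : privo e D u \subset cnbhS e P.
Proof.
case: (Xiter_grows n) => [hX0 | hn]; first by rewrite -setD_eq0 -[_ :\: _]/(Xcand _) hX0.
have -> : Xuv e D u v = setT by apply/eqP; rewrite eqEcard subsetT cardsT card_ord.
by apply/subsetP => t _; apply/cnbhSP; exists t; rewrite ?cnbh_refl // setU1r.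
Qed.

Lemma P_sub_privo : P \subset privo e D u.
Proof. by case: (Xuv_iter_invariant n) => hX _; rewrite subUset sub1set hv. Qed.

Lemma P_independent : independent P.
Proof. by case: (Xuv_iter_invariant n). Qed.

Lemma notin_cnbhS_P t : t \in D :\ u -> t \notin cnbhS e P.
Proof.
move=> ht; apply/cnbhSP => -[p hp]; rewrite cnbh_sym; apply/negP.
by apply: priv_notin_cnbh ht; case/setIP: (subsetP P_sub_privo p hp).
Qed.

Lemma Dprime_eq : Dprime e D u v = (D :\ u) :|: P.
Proof. by rewrite /Dprime -setUA (setUC (Xuv _ _ _ _)). Qed.

Lemma Dprime_dominating : dominating e (Dprime e D u v).
Proof.
have [/dominatingP hDdom _] := hD.
apply/dominatingP => t; rewrite Dprime_eq cnbhSU inE.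
case: (boolP (t \in cnbhS e (D :\ u))) => //= htD.
have htu : t \in cnbh e u.
  case/cnbhSP: (hDdom t) => d hd htd; case: (eqVneq d u) => [<- // | ndu].
  by case/negP: htD; apply/cnbhSP; exists d; rewrite // in_setD1 ndu.
case: (eqVneq t u) => [-> | ntu].
  apply/cnbhSP; exists v; first exact: setU11.
  by rewrite cnbh_sym in_cnbh; case/setIP: hv => _; rewrite inE => ->; rewrite orbT.
apply: (subsetP privo_sub_cnbhS_P).
move: (htu); rewrite in_cnbh (negbTE ntu) /= => hut.
by rewrite /privo /priv in_setI in_setD htD htu inE.
Qed.

Lemma P_self_private (S : {set 'I_n}) p :
  S \subset Dprime e D u v -> p \in P -> p \notin cnbhS e (S :\ p).
Proof.
move=> hS hp; apply/cnbhSP => -[t /setD1P[ntp htS]]; apply/negP.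
move: (subsetP hS t htS); rewrite Dprime_eq in_setU => /orP[htD | htP].
  by case/setIP: (subsetP P_sub_privo p hp) => hpp _; apply: priv_notin_cnbh hpp htD.
by rewrite in_cnbh eq_sym (negbTE ntp) (negbTE (P_independent htP hp)).
Qed.

Definition greedy_invariant (S : {set 'I_n}) :=
  [/\ S \subset Dprime e D u v, dominating e S & P \subset S].

Lemma grstep_invariant (S : {set 'I_n}) :
  greedy_invariant S -> greedy_invariant (grstep e S).
Proof.
case=> hS hdom hPS; rewrite /grstep; case: ifP => _; first by split.
case E: minv => [y|]; last by split.
have := minv_in E; rewrite inE => /andP[hyS hydom].
split=> //; first exact: subset_trans (subsetDl _ _) hS.
apply/subsetP => p hp; rewrite in_setD1 (subsetP hPS p hp) andbT.
by apply/eqP => epy; move: (P_self_private hS hp); rewrite epy (dominatingP _ hydom).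
Qed.

Lemma greedy_iter_invariant k : greedy_invariant (iter k (grstep e) (Dprime e D u v)).
Proof.
elim: k => [|k IH] /=; last exact: grstep_invariant.
by split; rewrite ?Dprime_dominating // Dprime_eq subsetUr.
Qed.

Lemma Dstar_invariant : greedy_invariant Ds.
Proof. exact: greedy_iter_invariant. Qed.

Lemma notin_Dstar z : z \in Z -> z \notin Ds.
Proof. by rewrite /Zuv inE => /andP[]. Qed.

Lemma Zuv_sub : Z \subset D :\ u.
Proof.
have [_ _ hPDs] := Dstar_invariant.
apply/subsetP => z hz; move: (hz); rewrite /Zuv inE Dprime_eq in_setU.
case/andP=> _ /orP[// | hzP].
by move: (notin_Dstar hz); rewrite (subsetP hPDs z hzP).
Qed.

Lemma Zuv_notin_cnbhS_P z : z \in Z -> z \notin cnbhS e P.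
Proof. by move=> hz; apply: notin_cnbhS_P; apply: (subsetP Zuv_sub). Qed.

Lemma Zuv_dominated z : z \in Z -> exists2 y, y \in Ds :\: P & e z y.
Proof.
move=> hz; have [_ /dominatingP hdom _] := Dstar_invariant.
case/cnbhSP: (hdom z) => y hy; rewrite in_cnbh => /orP[/eqP ezy | hyz].
  by move: (notin_Dstar hz); rewrite ezy hy.
exists y; last by rewrite e_sym.
rewrite inE hy andbT; apply: contra (Zuv_notin_cnbhS_P hz) => hyP.
by apply/cnbhSP; exists y; rewrite // in_cnbh hyz orbT.
Qed.

Lemma Dstar_outside_P_sub z : z \in Z -> Ds :\: P \subset D :\ z.
Proof.
move=> hz; have [hDsD' _ _] := Dstar_invariant.
apply/subsetP => t; rewrite inE => /andP[htP htDs].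
move: (subsetP hDsD' t htDs); rewrite Dprime_eq in_setU (negbTE htP) orbF.
case/setD1P=> _ htD; rewrite in_setD1 htD andbT.
by apply: contraNneq (notin_Dstar hz) => <-.
Qed.

Lemma Zuv_private_witness z : z \in Z ->
  exists x, [/\ x \in cnbhS e P :\: cnbh e u, e z x & x \notin cnbhS e (Ds :\: P)].
Proof.
move=> hz; have [_ /dominatingP hdom _] := Dstar_invariant.
have /setD1P[nzu hzD] := subsetP Zuv_sub z hz.
have [p /setDP[hpz hpD]] := minimal_dominating_priv hD hzD.
have hpout : p \notin cnbhS e (Ds :\: P).
  apply: contra hpD => /cnbhSP[t ht hpt]; apply/cnbhSP; exists t => //.
  exact: subsetP (Dstar_outside_P_sub hz) t ht.
have hpP : p \in cnbhS e P.
  case/cnbhSP: (hdom p) => y hy hpy.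
  case: (boolP (y \in P)) => hyP; first by apply/cnbhSP; exists y.
  by case/negP: hpout; apply/cnbhSP; exists y; rewrite // inE hyP.
exists p; split => //.
- rewrite inE hpP andbT; apply: contra hpD => hpu; apply/cnbhSP; exists u => //.
  by rewrite in_setD1 eq_sym nzu hu.
- move: hpz; rewrite in_cnbh => /orP[/eqP epz | //].
  by move: (Zuv_notin_cnbhS_P hz); rewrite -epz hpP.
Qed.

Lemma Zuv_covers x : x \in cnbhS e P :\: cnbh e u ->
  x \notin cnbhS e (Ds :\: P) -> exists2 z, z \in Z & e z x.
Proof.
case/setDP=> hxP hxu hxout; have [/dominatingP hDdom _] := hD.
case/cnbhSP: (hDdom x) => d hd hxd.
have hdD : d \in D :\ u by rewrite in_setD1 hd andbT; apply: contraNneq hxu => <-.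
have hdP := notin_cnbhS_P hdD.
exists d.
  rewrite /Zuv inE Dprime_eq in_setU hdD andbT.
  apply: contra hxout => hdDs; apply/cnbhSP; exists d => //.
  rewrite inE hdDs andbT; apply: contra hdP => hdP'.
  by apply/cnbhSP; exists d; rewrite ?cnbh_refl.
by move: hxd; rewrite in_cnbh => /orP[/eqP exd | //]; move: hdP; rewrite -exd hxP.
Qed.

End Swap.
End Domination.

Theorem lemma3 (n : nat) (e : rel 'I_n)
  (e_sym : symmetric e) (e_irr : irreflexive e)
  (D : {set 'I_n}) (u w v : 'I_n)
  (hD : minimal_dominating e D)
  (hu : u \in D) (hw : w \in D) (huw : e u w)
  (hv : v \in privo e D u) :
  let X := Xuv e D u v in
  let Ds := Dstar e D u v in
  let Z := Zuv e D u v in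
  (forall z, z \in Z ->
     [/\ z \notin cnbhS e (v |: X),
         exists2 y, y \in Ds :\: (v |: X) & e z y
       & exists x, [/\ x \in cnbhS e (v |: X) :\: cnbh e u, e z x
                     & x \notin cnbhS e (Ds :\: (v |: X))]])
  /\
  (forall x, x \in cnbhS e (v |: X) :\: cnbh e u ->
     x \notin cnbhS e (Ds :\: (v |: X)) ->
     exists2 z, z \in Z & e z x).
Proof.
move=> X Ds Z; split=> [z hz | x]; last exact: (Zuv_covers e_sym e_irr hD hv).
split.
- exact: (Zuv_notin_cnbhS_P e_sym e_irr hD hv hz).
- exact: (Zuv_dominated e_sym e_irr hD hv hz).
- exact: (Zuv_private_witness e_sym e_irr hD hu hv hz).
Qed.
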